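(* Let $n\ge 3$ be an integer, $A'=\{3^i-1: 0\le i\le n-2\}$ and $r=3^{n-2}-1$. Then $A'$ is a $B_3$ set of cardinality $n-1$ containing $0$. Consequently, for every integer $k\ge r+1$, setting $m=3k+6r+2$, $a_k=(3m+k)/2$, $A_k=a_k+A'$ and $S_k=\langle\{m\}\cup A_k\rangle_{4m}$, one has $W_0(S_k)=-\binom{n}{3}$.
   Context: $\mathbb N=\{0,1,2,\dots\}$; $[x,y]=\{z\in\mathbb Z: x\le z\le y\}$. A finite nonempty set $A'\subset\mathbb Z$ is a $B_3$ set if for all $x_1,x_2,x_3,y_1,y_2,y_3\in A'$, $x_1+x_2+x_3=y_1+y_2+y_3$ holds only if $(x_1,x_2,x_3)$ is a permutation of $(y_1,y_2,y_3)$. For a finite set $B$ of positive integers and a positive integer $t$, $\langle B\rangle_t=\big(\sum_{x\in B}\mathbb N x\big)\cup\{z\in\mathbb Z: z\ge t\}$; this is a numerical semigroup. A numerical semigroup is a submonoid $S\subseteq\mathbb N$ with $\mathbb N\setminus S$ finite; multiplicity $m=\min(S\setminus\{0\})$; conductor $c=1+\max(\mathbb Z\setminus S)$; $q=\lceil c/m\rceil$, $\rho=qm-c$. Let $S^*=S\setminus\{0\}$, $D=S^*+S^*$, $P=S^*\setminus D$, $L=S\cap[0,c-1]$, $D_q=D\cap[c,c+m-1]$, and $W_0(S)=|P\cap L|\,|L|-q|D_q|+\rho$. *)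

From mathcomp Require Import all_boot all_order all_algebra.
Set Implicit Arguments. Unset Strict Implicit. Unset Printing Implicit Defensive.
Import GRing.Theory Num.Theory.

(* B_3 set: a finite nonempty set of integers (here given by a list of naturals,
   which suffices since the sets considered are subsets of N) such that equal
   sums of three elements come from permuted triples. *)
Definition B3 (A : seq nat) : Prop :=
  A != [::] /\
  forall x1 x2 x3 y1 y2 y3,
    x1 \in A -> x2 \in A -> x3 \in A -> y1 \in A -> y2 \in A -> y3 \in A ->
    x1 + x2 + x3 = y1 + y2 + y3 -> perm_eq [:: x1; x2; x3] [:: y1; y2; y3].

(* z lies in the additive monoid sum_{x in B} N x.  Coefficients are bounded by z,
   which is no restriction when all elements of B are positive. *)
Definition in_monoid (B : seq nat) (z : nat) : bool :=
  [exists f : {ffun 'I_(size B) -> 'I_z.+1},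
     \sum_(i < size B) f i * nth 0 B i == z].

Definition gen_sg (B : seq nat) (t : nat) : pred nat :=
  fun z => in_monoid B z || (t <= z).

Section W0.
Variables (S : pred nat) (N : nat).
(* N is a bound such that every z >= N lies in S. *)

Definition Sstar (z : nat) : bool := S z && (0 < z).
Definition Dsum (z : nat) : bool :=
  [exists x : 'I_z.+1, exists y : 'I_z.+1,
     [&& Sstar x, Sstar y & x + y == z]].
Definition Prim (z : nat) : bool := Sstar z && ~~ Dsum z.

Definition mult : nat := head 0 [seq z <- iota 1 N.+1 | S z].
Definition conductor : nat := \max_(z < N | ~~ S z) z.+1.
Definition qq : nat := (conductor + mult - 1) %/ mult.
Definition rho : nat := qq * mult - conductor.
Definition cardL : nat := count S (iota 0 conductor).
Definition cardPL : nat := count Prim (iota 0 conductor).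
Definition cardDq : nat := count Dsum (iota conductor mult).

Definition W0 : int :=
  ((cardPL * cardL)%:Z - (qq * cardDq)%:Z + rho%:Z)%R.
End W0.

(* W_0 of the numerical semigroup <B>_t (t is a valid bound for gen_sg B t). *)
Definition W0_gen (B : seq nat) (t : nat) : int := W0 (gen_sg B t) t.

Definition Aprime (n : nat) : seq nat := [seq 3 ^ i - 1 | i <- iota 0 n.-1].

(* A sum of at most three powers of 3 determines its exponents (compare the number of
   exponents 0, which the sum fixes modulo 3, and divide by 3), so A' is a B_3 set.
   For the semigroup, the generators m and a + A' (with A' in [0, r]) lie in [m, 2m), and
   since 4a > 5m every element below 5m is a sum of c copies of m and j <= 3 elements of
   a + A'.  These sums fill the intervals [c m + j a, c m + j a + j r], which are pairwise
   disjoint (k > r separates 3m + a + r from 3a), and inside each interval they are distinct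
   because A' is B_3.  Counting them gives, with p = |A'|, conductor 4m, multiplicity m,
   q = 4, rho = 0, |L| = 4 + 3p + C(p+1,2), |P /\ L| = p + 1 and
   |D_q| = 1 + p + C(p+1,2) + C(p+2,3), whence W_0 = -C(p+1,3). *)

From mathcomp Require Import all_boot all_order all_algebra.
From mathcomp Require Import zify.
Set Implicit Arguments. Unset Strict Implicit. Unset Printing Implicit Defensive.
Import GRing.Theory.

Definition sum_pow3 (s : seq nat) : nat := sumn [seq 3 ^ e | e <- s].

Definition exps_div3 (s : seq nat) : seq nat := [seq e.-1 | e <- s & 0 < e].

Lemma sum_pow3_div3 (s : seq nat) : sum_pow3 s = count_mem 0 s + 3 * sum_pow3 (exps_div3 s).
Proof.
by elim: s => [|[|e] s IH] //; rewrite /sum_pow3 /exps_div3 /= in IH *; rewrite IH ?expnS; lia.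
Qed.

Lemma size_exps_div3 (s : seq nat) : size s = count_mem 0 s + size (exps_div3 s).
Proof. by elim: s => [|[|e] s IH] //; rewrite /exps_div3 /= in IH *; rewrite IH; lia. Qed.

Lemma count_exps_div3 x (s : seq nat) : count_mem x.+1 s = count_mem x (exps_div3 s).
Proof. by elim: s => [|[|e] s IH] //; rewrite /exps_div3 /= in IH *; rewrite IH. Qed.

Lemma size_le_sum_pow3 (s : seq nat) : size s <= sum_pow3 s.
Proof.
elim: s => [|e s IH] //; rewrite /sum_pow3 /= in IH *.
by rewrite -add1n leq_add ?expn_gt0.
Qed.

(* The number of zero exponents is at most 3 and is fixed modulo 3 by the sum; the cases 0 and 3
   are distinguished because three other exponents contribute at least 9 > 3 to the sum. *)
Lemma sum_pow3_div3_eq (s t : seq nat) :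
  size s = size t -> size s <= 3 -> sum_pow3 s = sum_pow3 t ->
  [/\ count_mem 0 s = count_mem 0 t, size (exps_div3 s) = size (exps_div3 t)
    & sum_pow3 (exps_div3 s) = sum_pow3 (exps_div3 t)].
Proof.
move=> eq_size le3 eq_sum.
have := sum_pow3_div3 s; have := sum_pow3_div3 t.
have := size_exps_div3 s; have := size_exps_div3 t.
have := size_le_sum_pow3 (exps_div3 s); have := size_le_sum_pow3 (exps_div3 t).
have : size (exps_div3 s) = 0 -> sum_pow3 (exps_div3 s) = 0 by case: (exps_div3 s).
have : size (exps_div3 t) = 0 -> sum_pow3 (exps_div3 t) = 0 by case: (exps_div3 t).
by move=> *; split; lia.
Qed.

Lemma perm_eq_sum_pow3 (s t : seq nat) :
  size s = size t -> size s <= 3 -> sum_pow3 s = sum_pow3 t -> perm_eq s t.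
Proof.
move=> eq_size le3 eq_sum; apply/allP => x _; apply/eqP.
elim: x s t eq_size le3 eq_sum => [|x IH] s t eq_size le3 eq_sum;
  have [eq_count0 eq_size' eq_sum'] := sum_pow3_div3_eq eq_size le3 eq_sum => //.
rewrite !count_exps_div3; apply: IH => //.
by apply: leq_trans le3; rewrite [leqRHS]size_exps_div3 leq_addl.
Qed.

Lemma AprimeP n x : reflect (exists2 i, i < n.-1 & x = 3 ^ i - 1) (x \in Aprime n).
Proof.
apply: (iffP mapP) => [[i]|[i lt_i ->]]; last by exists i; rewrite ?mem_iota.
by rewrite mem_iota => lt_i ->; exists i.
Qed.

Lemma size_Aprime n : size (Aprime n) = n.-1.
Proof. by rewrite size_map size_iota. Qed.

Lemma uniq_Aprime n : uniq (Aprime n).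
Proof.
rewrite map_inj_uniq ?iota_uniq // => i j eq_ij.
by apply: (expnI (isT : 1 < 3)); have := expn_gt0 3 i; have := expn_gt0 3 j; lia.
Qed.

Lemma Aprime_le n x : x \in Aprime n -> x <= 3 ^ n.-2 - 1.
Proof. by case/AprimeP => i lt_i ->; rewrite leq_sub2r // leq_exp2l //; lia. Qed.

Lemma mem0_Aprime n : 1 < n -> 0 \in Aprime n.
Proof. by move=> lt1n; apply/AprimeP; exists 0 => //; lia. Qed.

Lemma B3_Aprime n : 1 < n -> B3 (Aprime n).
Proof.
move=> lt1n; split; first by rewrite -size_eq0 size_Aprime; lia.
move=> ? ? ? ? ? ? /AprimeP[i1 _ ->] /AprimeP[i2 _ ->] /AprimeP[i3 _ ->]
  /AprimeP[j1 _ ->] /AprimeP[j2 _ ->] /AprimeP[j3 _ ->] eq_sum.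
have /(perm_map (fun i => 3 ^ i - 1)) // : perm_eq [:: i1; i2; i3] [:: j1; j2; j3].
apply: perm_eq_sum_pow3 => //; rewrite /sum_pow3 /=.
have := expn_gt0 3 i1; have := expn_gt0 3 i2; have := expn_gt0 3 i3.
have := expn_gt0 3 j1; have := expn_gt0 3 j2; have := expn_gt0 3 j3; lia.
Qed.

(* One entry for each multiset of two (three) entries of [s], namely [x + ...] for those
   whose first element in the order of [s] is [x]. *)
Fixpoint sums2 (s : seq nat) : seq nat :=
  if s is x :: s' then [seq x + y | y <- s] ++ sums2 s' else [::].

Fixpoint sums3 (s : seq nat) : seq nat :=
  if s is x :: s' then [seq x + y | y <- sums2 s] ++ sums3 s' else [::].

Lemma sums2_cons x s : sums2 (x :: s) = [seq x + y | y <- x :: s] ++ sums2 s.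
Proof. by []. Qed.

Lemma sums3_cons x s : sums3 (x :: s) = [seq x + y | y <- sums2 (x :: s)] ++ sums3 s.
Proof. by []. Qed.

Lemma size_sums2 s : size (sums2 s) = 'C((size s).+1, 2).
Proof.
elim: s => [|x s IH] //.
by rewrite sums2_cons size_cat size_map IH [in RHS]binS bin1 addnC.
Qed.

Lemma size_sums3 s : size (sums3 s) = 'C((size s).+2, 3).
Proof.
elim: s => [|x s IH] //.
by rewrite sums3_cons size_cat size_map size_sums2 IH [in RHS]binS addnC.
Qed.

Lemma sums2P (s : seq nat) z :
  reflect (exists x y : nat, [/\ x \in s, y \in s & z = x + y]) (z \in sums2 s).
Proof.
apply: (iffP idP).
  elim: s => [|x0 s IH] //; rewrite sums2_cons mem_cat.
  case/orP=> [/mapP[y s_y ->]|/IH[x [y [s_x s_y ->]]]].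
    by exists x0, y; rewrite mem_head.
  by exists x, y; rewrite !inE s_x s_y !orbT.
case=> x [y [+ + ->]]; elim: s => [|x0 s IH] //; rewrite sums2_cons mem_cat.
case/predU1P=> [-> s_y|s_x]; first by rewrite map_f.
case/predU1P=> [->|s_y]; first by rewrite addnC map_f //; apply/predU1P; right.
by rewrite IH ?orbT.
Qed.

Lemma sums3P (s : seq nat) z :
  reflect (exists x y w : nat, [/\ x \in s, y \in s, w \in s & z = x + y + w])
          (z \in sums3 s).
Proof.
apply: (iffP idP).
  elim: s => [|x0 s IH] //; rewrite sums3_cons mem_cat.
  case/orP=> [/mapP[_ /sums2P[y [w [s_y s_w ->]]] ->]|/IH[x [y [w [s_x s_y s_w ->]]]]].
    by exists x0, y, w; rewrite mem_head addnA.
  by exists x, y, w; rewrite !inE s_x s_y s_w !orbT.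
case=> x [y [w [+ + + ->]]]; elim: s => [|x0 s IH] //; rewrite sums3_cons mem_cat.
have sums2_x0 u v : u \in x0 :: s -> v \in x0 :: s -> x0 + (u + v) \in
    [seq x0 + y | y <- sums2 (x0 :: s)].
  by move=> s_u s_v; apply/map_f/sums2P; exists u, v.
case/predU1P=> [-> s_y s_w|s_x]; first by rewrite -addnA sums2_x0.
have s'_x : x \in x0 :: s by apply/predU1P; right.
case/predU1P=> [-> s_w|s_y]; first by rewrite addnAC addnC sums2_x0.
have s'_y : y \in x0 :: s by apply/predU1P; right.
case/predU1P=> [->|s_w]; first by rewrite addnC sums2_x0.
by rewrite IH ?orbT.
Qed.

Section SumsOfB3Set.

Variable A : seq nat.
Hypothesis A_B3 : B3 A.

Lemma B3_perm2 x1 x2 y1 y2 : x1 \in A -> x2 \in A -> y1 \in A -> y2 \in A ->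
  x1 + x2 = y1 + y2 -> perm_eq [:: x1; x2] [:: y1; y2].
Proof.
case: A_B3; case: A => // z A' _ B3_A Ax1 Ax2 Ay1 Ay2 eq_sum.
rewrite -(perm_cons z) -(perm_rcons z) perm_sym -(perm_rcons z) perm_sym.
by apply: B3_A; rewrite ?mem_head // eq_sum.
Qed.

Lemma uniq_sums2 (s : seq nat) : {subset s <= A} -> uniq s -> uniq (sums2 s).
Proof.
elim: s => [|x s IH] // sub_xs xs_uniq; have := xs_uniq; rewrite cons_uniq => /andP[s'x uniq_s].
have sub_s : {subset s <= A} by move=> y s_y; apply/sub_xs/predU1P; right.
rewrite sums2_cons cat_uniq IH // andbT (map_inj_uniq (@addnI x)) xs_uniq.
apply/hasPn => _ /sums2P[u [v [s_u s_v ->]]]; apply/mapP => -[y xs_y eq_sum].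
have /perm_mem/(_ x) := B3_perm2 (sub_s _ s_u) (sub_s _ s_v)
  (sub_xs _ (mem_head x s)) (sub_xs _ xs_y) eq_sum.
by rewrite mem_head !inE => /orP[] /eqP x_eq; move: s'x; rewrite x_eq ?s_u ?s_v.
Qed.

Lemma uniq_sums3 (s : seq nat) : {subset s <= A} -> uniq s -> uniq (sums3 s).
Proof.
elim: s => [|x s IH] // sub_xs xs_uniq; have := xs_uniq; rewrite cons_uniq => /andP[s'x uniq_s].
have sub_s : {subset s <= A} by move=> y s_y; apply/sub_xs/predU1P; right.
rewrite sums3_cons cat_uniq IH // andbT (map_inj_uniq (@addnI x)) uniq_sums2 //.
apply/hasPn => _ /sums3P[u [v [w [s_u s_v s_w ->]]]].
apply/mapP => -[_ /sums2P[y [y' [xs_y xs_y' ->]]] /esym eq_sum].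
have /perm_mem/(_ x) := A_B3.2 _ _ _ _ _ _ (sub_s _ s_u) (sub_s _ s_v) (sub_s _ s_w)
  (sub_xs _ (mem_head x s)) (sub_xs _ xs_y) (sub_xs _ xs_y') ltac:(by rewrite -eq_sum addnA).
by rewrite mem_head !inE => /or3P[] /eqP x_eq; move: s'x; rewrite x_eq ?s_u ?s_v ?s_w.
Qed.

End SumsOfB3Set.

Definition sumn_of (B : seq nat) (z : nat) : Prop :=
  exists2 s : seq nat, all (mem B) s & sumn s = z.

Lemma in_monoidP B z : all (fun x => 0 < x) B -> in_monoid B z <-> sumn_of B z.
Proof.
move=> B_pos; split.
  case/existsP=> f /eqP <-.
  exists (\big[cat/[::]]_(i < size B) nseq (f i) (nth 0 B i)).
    apply: (big_ind (fun s => all (mem B) s)) => [//|s1 s2 B_s1 B_s2|i _].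
      by rewrite all_cat B_s1 B_s2.
    by rewrite all_nseq /= mem_nth ?orbT.
  rewrite (big_morph sumn sumn_cat (erefl : sumn [::] = 0)).
  by apply: eq_bigr => i _; rewrite sumn_nseq mulnC.
case=> s + <-; elim: s => [|g s IH] /=.
  by move=> _; apply/existsP; exists [ffun _ => ord0]; rewrite big1 // => i _; rewrite ffunE.
case/andP=> B_g /IH /existsP[f /eqP sum_f].
have g_pos : 0 < g by move/allP: B_pos => /(_ g B_g).
pose i0 := Ordinal (etrans (index_mem g B) B_g).
pose f' := [ffun i => inord (f i + (i == i0)) : 'I_(g + sumn s).+1].
have f'E i : nat_of_ord (f' i) = f i + (i == i0).
  by rewrite ffunE inordK //; have := ltn_ord (f i); case: (i == i0) => /=; lia.
apply/existsP; exists f'.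
under eq_bigr => i _ do rewrite f'E mulnDl.
rewrite big_split /= sum_f (bigD1 i0) //= eqxx mul1n big1 ?addn0 ?nth_index 1?addnC //.
by move=> i /negbTE ->.
Qed.

Lemma count_mem_iota (E : seq nat) lo len : uniq E ->
  count (mem E) (iota lo len) = count (fun x => lo <= x < lo + len) E.
Proof.
move=> E_uniq; rewrite -!size_filter; apply/perm_size/uniq_perm.
- exact/filter_uniq/iota_uniq.
- exact: filter_uniq.
- by move=> x; rewrite !mem_filter mem_iota andbC.
Qed.

Section B3Semigroup.

Variables (A : seq nat) (r k m a : nat).
Hypotheses (A_uniq : uniq A) (A_B3 : B3 A) (A_le_r : {in A, forall x, x <= r}) (lt_rk : r < k)
  (def_m : m = 3 * k + 6 * r + 2) (def_a : a = 5 * k + 9 * r + 3).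

Local Notation p := (size A).
Local Notation gens := (m :: [seq a + x | x <- A]).
Local Notation Sg := (gen_sg gens (4 * m)).

Definition msums (j : nat) : seq nat := nth [::] [:: [:: 0]; A; sums2 A; sums3 A] j.

Lemma msums_le j (x : nat) : x \in msums j -> x <= j * r.
Proof.
case: j => [|[|[|[|j]]]]; rewrite /msums //=; first by rewrite inE => /eqP->.
- by rewrite mul1n; apply: A_le_r.
- by case/sums2P=> u [v [A_u A_v ->]]; have := A_le_r A_u; have := A_le_r A_v; lia.
- case/sums3P=> u [v [w [A_u A_v A_w ->]]].
  by have := A_le_r A_u; have := A_le_r A_v; have := A_le_r A_w; lia.
by rewrite nth_nil.
Qed.

Lemma uniq_msums j : uniq (msums j).
Proof.
case: j => [|[|[|[|j]]]]; rewrite /msums //=; last by rewrite nth_nil.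
  by apply: (uniq_sums2 A_B3).
by apply: (uniq_sums3 A_B3).
Qed.

Lemma sumn_mem_msums (t : seq nat) : all (mem A) t -> size t <= 3 -> sumn t \in msums (size t).
Proof.
rewrite /msums; case: t => [|x [|y [|w [|]]]] //=; rewrite ?addn0 ?andbT.
- by [].
- by move=> /andP[A_x A_y] _; apply/sums2P; exists x, y.
- by move=> /and3P[A_x A_y A_w] _; apply/sums3P; exists x, y, w; rewrite addnA.
Qed.

Lemma msumsP j (x : nat) : x \in msums j -> exists2 t, all (mem A) t & size t = j /\ sumn t = x.
Proof.
case: j => [|[|[|[|j]]]]; rewrite /msums //=.
- by rewrite inE => /eqP->; exists [::].
- by move=> A_x; exists [:: x]; rewrite /= ?A_x ?addn0.
- by case/sums2P=> u [v [A_u A_v ->]]; exists [:: u; v]; rewrite /= ?A_u ?A_v ?addn0.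
- case/sums3P=> u [v [w [A_u A_v A_w ->]]]; exists [:: u; v; w].
    by rewrite /= A_u A_v A_w.
  by rewrite /= addn0 addnA.
by rewrite nth_nil.
Qed.

Definition seg (c j : nat) : seq nat := [seq c * m + j * a + x | x <- msums j].

Definition segs (cs : seq (nat * nat)) : seq nat := flatten [seq seg cj.1 cj.2 | cj <- cs].

Lemma segsP cs z :
  reflect (exists c j x, [/\ (c, j) \in cs, x \in msums j & z = c * m + j * a + x])
          (z \in segs cs).
Proof.
apply: (iffP flattenP) => [[_ /mapP[[c j] cs_cj ->] /mapP[x msums_x ->]]|].
  by exists c, j, x.
case=> c [j [x [cs_cj msums_x ->]]].
by exists (seg c j); [apply: (map_f _ cs_cj)|apply: map_f].
Qed.

Lemma segs_cat cs1 cs2 : segs (cs1 ++ cs2) = segs cs1 ++ segs cs2.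
Proof. by rewrite /segs map_cat flatten_cat. Qed.

Lemma count_segs (P : pred nat) cs :
  count P (segs cs) = sumn [seq count P (seg cj.1 cj.2) | cj <- cs].
Proof. by rewrite /segs count_flatten -map_comp. Qed.

Lemma count_seg_in lo hi c j : (lo <= c * m + j * a) && (c * m + j * a + j * r < hi) ->
  count (fun z => lo <= z < hi) (seg c j) = size (msums j).
Proof.
move=> in_window; rewrite count_map -(count_predT (msums j)).
by apply: eq_in_count => x /msums_le /=; lia.
Qed.

Lemma count_seg_out lo hi c j : (c * m + j * a + j * r < lo) || (hi <= c * m + j * a) ->
  count (fun z => lo <= z < hi) (seg c j) = 0.
Proof.
move=> off_window; rewrite count_map -(count_pred0 (msums j)).
by apply: eq_in_count => x /msums_le /=; lia.
Qed.

Lemma notin_segs cs z :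
  all (fun cj => (cj.1 * m + cj.2 * a + cj.2 * r < z) || (z < cj.1 * m + cj.2 * a)) cs ->
  z \notin segs cs.
Proof.
move=> /allP cs_off; apply/segsP => -[c [j [x [/cs_off /= off_z /msums_le le_x z_eq]]]].
by move: off_z; rewrite z_eq; lia.
Qed.

Definition seg_before (cj cj' : nat * nat) : bool :=
  cj.1 * m + cj.2 * a + cj.2 * r < cj'.1 * m + cj'.2 * a.

Lemma uniq_segs cs : sorted seg_before cs -> uniq (segs cs).
Proof.
have before_trans : transitive seg_before.
  by move=> [c2 j2] [c1 j1] [c3 j3]; rewrite /seg_before /=; lia.
elim: cs => [|[c j] cs IH] //= cs_path.
rewrite cat_uniq IH ?(path_sorted cs_path) // andbT.
rewrite (map_inj_uniq (@addnI _)) ?uniq_msums //=.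
apply/hasPn => z /segsP[c' [j' [x' [cs_cj' /msums_le le_x' ->]]]].
apply/mapP => -[x /msums_le le_x].
have := allP (order_path_min before_trans cs_path) _ cs_cj'; rewrite /seg_before /=; lia.
Qed.

(* The shapes [(c, j)] with [c * m + j * a < 5 * m], listed in increasing order of their
   segments: [(0, 0)], those of the generators, and those of sums of at least two generators. *)
Definition gen_shapes : seq (nat * nat) := [:: (1, 0); (0, 1)].
Definition Dsum_shapes : seq (nat * nat) :=
  [:: (2, 0); (1, 1); (3, 0); (0, 2); (2, 1); (4, 0); (1, 2); (3, 1); (0, 3)].
Definition S_shapes : seq (nat * nat) := (0, 0) :: gen_shapes ++ Dsum_shapes.

Lemma segs_gen_shapes : segs gen_shapes = gens.
Proof.
rewrite /segs /= /seg /msums /= cats0 mul1n !mul0n !addn0 add0n mul1n.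
by congr (_ :: _); apply: eq_map => x.
Qed.

Lemma segs_S_shapes : segs S_shapes = 0 :: gens ++ segs Dsum_shapes.
Proof. by rewrite /S_shapes -cat1s !segs_cat segs_gen_shapes. Qed.

Lemma sorted_S_shapes : sorted seg_before S_shapes.
Proof. by rewrite /= /seg_before /=; lia. Qed.

Lemma sorted_gen_Dsum_shapes : sorted seg_before gen_shapes * sorted seg_before Dsum_shapes.
Proof. exact/cat_sorted2/(path_sorted sorted_S_shapes). Qed.

Lemma gens_decomp (s : seq nat) : all (mem gens) s -> exists c (t : seq nat),
  [/\ all (mem A) t, size s = c + size t & sumn s = c * m + size t * a + sumn t].
Proof.
elim: s => [|g s IH] /=; first by exists 0, [::].
case/andP=> /predU1P[->|/mapP[x A_x ->]] /IH[c [t [A_t size_s sum_s]]].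
  by exists c.+1, t; split=> //; rewrite ?size_s ?sum_s; lia.
by exists c, (x :: t); split; rewrite /= ?A_x ?size_s ?sum_s //; lia.
Qed.

Lemma shape_below_5m c j : j <= 3 -> c * m + j * a < 5 * m ->
  (c, j) \in (if 2 <= c + j then Dsum_shapes else (0, 0) :: gen_shapes).
Proof.
move=> le_j3 lt_5m; have le_c4 : c <= 4 by nia.
by case: c le_c4 lt_5m => [|[|[|[|[|]]]]] // _; case: j le_j3 => [|[|[|[|]]]] // _; lia.
Qed.

(* Because [4 a > 5 m], a sum of generators below [5 m] uses at most three generators from
   [a + A]. *)
Lemma sumn_gens_below_5m (s : seq nat) : all (mem gens) s -> sumn s < 5 * m ->
  sumn s \in segs (if 2 <= size s then Dsum_shapes else (0, 0) :: gen_shapes).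
Proof.
case/gens_decomp=> c [t [A_t -> ->]] lt_5m.
have le_t3 : size t <= 3 by nia.
apply/segsP; exists c, (size t), (sumn t); split=> //; last exact: sumn_mem_msums.
by apply: shape_below_5m => //; lia.
Qed.

Lemma segs_sumn_gens cs z : z \in segs cs ->
  exists2 cj, cj \in cs &
    exists2 s : seq nat, all (mem gens) s & size s = cj.1 + cj.2 /\ sumn s = z.
Proof.
case/segsP=> c [j [x [cs_cj /msumsP[t A_t [size_t sum_t]] ->]]].
exists (c, j) => //; exists (nseq c m ++ [seq a + y | y <- t]).
  rewrite all_cat all_nseq !inE eqxx orbT /=.
  by apply/allP => _ /mapP[y t_y ->]; rewrite !inE map_f ?orbT //; apply: (allP A_t).
have sumn_shift : sumn [seq a + y | y <- t] = size t * a + sumn t.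
  by elim: (t) => //= y t' ->; lia.
by rewrite size_cat size_nseq size_map sumn_cat sumn_nseq sumn_shift size_t sum_t; split=> //; lia.
Qed.

Lemma gens_range z : z \in gens -> m <= z < 2 * m.
Proof. by case/predU1P=> [->|/mapP[x /A_le_r le_x ->]]; lia. Qed.

Lemma gens_pos : all (fun x => 0 < x) gens.
Proof. by apply/allP => z /gens_range; lia. Qed.

Lemma size_le_sumn_gens (s : seq nat) : all (mem gens) s -> size s * m <= sumn s.
Proof. by elim: s => //= g s IH /andP[/gens_range le_g /IH]; lia. Qed.

Lemma S_sumn_gens (s : seq nat) : all (mem gens) s -> Sg (sumn s).
Proof. by move=> gens_s; apply/orP; left; apply/(in_monoidP _ gens_pos); exists s. Qed.

Lemma S_below_4m z : z < 4 * m -> Sg z = (z \in segs S_shapes).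
Proof.
move=> lt_z; apply/idP/idP.
  case/orP=> [/(in_monoidP _ gens_pos)[s gens_s sum_s]|]; last lia.
  have := sumn_gens_below_5m gens_s; rewrite sum_s /S_shapes -cat_cons segs_cat mem_cat.
  by case: ifP => _ ->; rewrite ?orbT //; lia.
by case/segs_sumn_gens=> _ _ [s /S_sumn_gens S_s [_ <-]].
Qed.

Lemma S_ge_m z : Sg z -> 0 < z -> m <= z.
Proof.
case/orP=> [/(in_monoidP _ gens_pos)[s gens_s <-]|]; last lia.
by have := size_le_sumn_gens gens_s; case: s gens_s => //= g s _; lia.
Qed.

Lemma Dsum_below_5m z : z < 5 * m -> Dsum Sg z = (z \in segs Dsum_shapes).
Proof.
move=> lt_z; apply/idP/idP.
  case/existsP=> x /existsP[y /and3P[/andP[S_x x_pos] /andP[S_y y_pos] /eqP sum_xy]].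
  have m_x := S_ge_m S_x x_pos; have m_y := S_ge_m S_y y_pos.
  move: S_x S_y; rewrite !S_below_4m; try lia.
  case/segs_sumn_gens=> _ _ [sx gens_sx [_ sum_sx]].
  case/segs_sumn_gens=> _ _ [sy gens_sy [_ sum_sy]].
  have := @sumn_gens_below_5m (sx ++ sy).
  rewrite all_cat gens_sx gens_sy sumn_cat sum_sx sum_sy sum_xy.
  move=> /(_ isT lt_z); rewrite size_cat ifT //.
  have size_pos (s : seq nat) w : sumn s = w -> 0 < w -> 0 < size s by case: s => //= <-.
  by have := size_pos _ _ sum_sx x_pos; have := size_pos _ _ sum_sy y_pos; lia.
case/segs_sumn_gens=> cj Dsum_cj [s gens_s [size_s <-]].
have : 2 <= size s by rewrite size_s; move: cj Dsum_cj {size_s}; apply/allP.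
case: s gens_s {size_s} => [|g [|g' s]] //= /andP[gens_g gens_gs] _.
have S_gs : Sg (g' + sumn s) := @S_sumn_gens (g' :: s) gens_gs.
have S_g : Sg g by have := @S_sumn_gens [:: g]; rewrite /= gens_g addn0; apply.
have := gens_range gens_g; have := @size_le_sumn_gens (g' :: s) gens_gs; rewrite /= => m_gs m_g.
apply/existsP; exists (inord g); apply/existsP; exists (inord (g' + sumn s)).
by rewrite !inordK ?eqxx /Sstar ?S_g ?S_gs ?andbT /=; lia.
Qed.

Ltac count_in_window :=
  rewrite count_segs /S_shapes /gen_shapes /Dsum_shapes; cbn [map cat sumn fst snd];
  repeat first [ rewrite count_seg_in; last lia | rewrite count_seg_out; last lia ];
  rewrite /msums /= ?size_sums2 ?size_sums3.

Lemma conductor_eq : conductor Sg (4 * m) = 4 * m.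
Proof.
apply/eqP; rewrite eqn_leq; apply/andP; split.
  by apply/bigmax_leqP => i _; exact: ltn_ord.
have lt_4m : 4 * m - 1 < 4 * m by lia.
have gap : ~~ Sg (4 * m - 1).
  by rewrite S_below_4m // notin_segs // /S_shapes /gen_shapes /Dsum_shapes /=; lia.
apply: leq_trans (leq_bigmax_cond (Ordinal lt_4m) gap) => /=; lia.
Qed.

Lemma mult_eq : mult Sg (4 * m) = m.
Proof.
rewrite /mult (_ : (4 * m).+1 = m.-1 + (3 * m + 1).+1); last lia.
rewrite iotaD filter_cat (_ : 1 + m.-1 = m); last lia.
rewrite (@eq_in_filter _ _ pred0) ?filter_pred0 /=; last first.
  by move=> z; rewrite mem_iota => lt_z; apply/negbTE/negP => /S_ge_m; lia.
by have := @S_sumn_gens [:: m]; rewrite /= mem_head addn0 => ->.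
Qed.

Lemma cardL_eq : cardL Sg (4 * m) = 4 + 3 * p + 'C(p.+1, 2).
Proof.
rewrite /cardL conductor_eq (eq_in_count (a2 := mem (segs S_shapes))); last first.
  by move=> z; rewrite mem_iota => lt_z; rewrite S_below_4m //; lia.
rewrite count_mem_iota ?uniq_segs ?sorted_S_shapes //; count_in_window; lia.
Qed.

Lemma Prim_below_4m z : z < 4 * m -> Prim Sg z = (z \in segs gen_shapes).
Proof.
move=> lt_z; rewrite /Prim /Sstar S_below_4m // Dsum_below_5m; last lia.
rewrite segs_S_shapes segs_gen_shapes in_cons mem_cat.
have [gens_z|] := boolP (z \in gens).
  have [m_z lt_z2m] := andP (gens_range gens_z).
  rewrite notin_segs /Dsum_shapes /= ?orbT; lia.
by move=> _; case: (z \in segs _); rewrite ?andbF // orbF andbT; case: eqP => // ->.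
Qed.

Lemma cardPL_eq : cardPL Sg (4 * m) = p.+1.
Proof.
rewrite /cardPL conductor_eq (eq_in_count (a2 := mem (segs gen_shapes))); last first.
  by move=> z; rewrite mem_iota => lt_z; rewrite Prim_below_4m //; lia.
rewrite count_mem_iota ?uniq_segs ?sorted_gen_Dsum_shapes //; count_in_window; lia.
Qed.

Lemma cardDq_eq : cardDq Sg (4 * m) = 1 + p + 'C(p.+1, 2) + 'C(p.+2, 3).
Proof.
rewrite /cardDq conductor_eq mult_eq (eq_in_count (a2 := mem (segs Dsum_shapes))); last first.
  by move=> z; rewrite mem_iota => lt_z; rewrite Dsum_below_5m //; lia.
rewrite count_mem_iota ?uniq_segs ?sorted_gen_Dsum_shapes //; count_in_window; lia.
Qed.

Lemma qq_eq : qq Sg (4 * m) = 4.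
Proof. by rewrite /qq conductor_eq mult_eq -addnBA ?divnMDl ?divn_small; lia. Qed.

Lemma rho_eq : rho Sg (4 * m) = 0.
Proof. by rewrite /rho qq_eq conductor_eq mult_eq subnn. Qed.

Lemma W0_B3_shift : W0 Sg (4 * m) = (- 'C(p.+1, 3)%:Z)%R.
Proof.
rewrite /W0 cardPL_eq cardL_eq cardDq_eq qq_eq rho_eq.
have := mul_bin_left p.+1 2; have := mul_bin_left p.+1 1; have := binS p.+1 2; rewrite bin1.
move=> bin3S mul_bin2 mul_bin3.
have -> : 4 * (1 + p + 'C(p.+1, 2) + 'C(p.+2, 3))
          = p.+1 * (4 + 3 * p + 'C(p.+1, 2)) + 'C(p.+1, 3) by nia.
by rewrite PoszD addr0 opprD addrA subrr add0r.
Qed.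
End B3Semigroup.

Theorem mainTheorem7 (n : nat) (hn : 3 <= n) :
  let A' := Aprime n in
  let r := 3 ^ (n - 2) - 1 in
  [/\ B3 A', size (undup A') = n - 1, 0 \in A' &
   forall k : nat, r + 1 <= k ->
     let m := 3 * k + 6 * r + 2 in
     let a := (3 * m + k) %/ 2 in
     let Ak := [seq a + x | x <- A'] in
     W0_gen (m :: Ak) (4 * m) = (- ('C(n, 3))%:Z)%R].
Proof.
move=> A' r; have lt1n : 1 < n by lia.
split; [exact: B3_Aprime|by rewrite undup_id ?uniq_Aprime // size_Aprime; lia|exact: mem0_Aprime|].
move=> k /[!addn1] lt_rk m a Ak.
have def_a : a = 5 * k + 9 * r + 3.
  by rewrite /a (_ : 3 * m + k = (5 * k + 9 * r + 3) * 2) ?mulnK // /m; lia.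
have A'_le_r : {in A', forall x, x <= r} by move=> x /Aprime_le; rewrite /r subn2.
have := W0_B3_shift (uniq_Aprime n) (B3_Aprime lt1n) A'_le_r lt_rk erefl def_a.
by rewrite /W0_gen size_Aprime prednK //; lia.
Qed.
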